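(* Let $D:\mathbb R^2\setminus\{0\}\to\mathbb R$ be nonnegative, bounded and continuously differentiable, and consider $\ddot x+D(x)\dot x=-x/|x|^3$. Let $T,r_A,r_B>0$ and let $x_n:[-T,0]\to\mathbb R^2\setminus\{0\}$ be solutions with $|x_n(-T)|=r_A$ and $|x_n(0)|=r_B$ such that $\{\dot r_n(0)\}$ is bounded, where $r_n=|x_n|$. Then $\{c_n(0)\}$ is bounded, where $c_n=\det(x_n,\dot x_n)$. *)

From Stdlib Require Import Reals.
Open Scope R_scope.

Definition norm2 (x y : R) : R := sqrt (x ^ 2 + y ^ 2).

Definition deriv_within (a b : R) (f : R -> R) (d t : R) : Prop :=
  forall eps, 0 < eps -> exists delta, 0 < delta /\
    forall s, a <= s <= b -> 0 < Rabs (s - t) < delta ->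
      Rabs ((f s - f t) / (s - t) - d) < eps.

Definition cont2 (g : R -> R -> R) (x y : R) : Prop :=
  forall eps, 0 < eps -> exists delta, 0 < delta /\
    forall u w, Rabs (u - x) < delta -> Rabs (w - y) < delta ->
      Rabs (g u w - g x y) < eps.

Definition C1_punctured (D : R -> R -> R) : Prop :=
  exists D1 D2 : R -> R -> R,
    forall x y, (x, y) <> (0, 0) ->
      derivable_pt_lim (fun u => D u y) x (D1 x y) /\
      derivable_pt_lim (fun w => D x w) y (D2 x y) /\
      cont2 D1 x y /\ cont2 D2 x y.

Definition is_solution (D : R -> R -> R) (T : R)
    (x1 x2 v1 v2 : R -> R) : Prop :=
  forall t, -T <= t <= 0 ->
    (x1 t, x2 t) <> (0, 0) /\
    deriv_within (-T) 0 x1 (v1 t) t /\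
    deriv_within (-T) 0 x2 (v2 t) t /\
    deriv_within (-T) 0 v1
      (- D (x1 t) (x2 t) * v1 t - x1 t / (norm2 (x1 t) (x2 t)) ^ 3) t /\
    deriv_within (-T) 0 v2
      (- D (x1 t) (x2 t) * v2 t - x2 t / (norm2 (x1 t) (x2 t)) ^ 3) t.

From Stdlib Require Import Reals Lra.
From Coquelicot Require Import Coquelicot.
Open Scope R_scope.

(* Along a solution on [-T, 0] the energy |v|^2 - 2/r (r = |x|) decreases at rate
   2 D |v|^2, so it never drops below its final value E.  The virial Y = x.v = r r'
   satisfies Y' = |v|^2 - D Y - 1/r.  If E > B m, where B bounds D and m bounds
   Y(0) = r_B r'(0), a barrier argument gives Y(t) <= m + (E - B m) t on [-T, 0], and
   integrating (r^2)' = 2 Y yields (E - B m) T^2 <= r_A^2 + 2 m T.  So |v(0)|^2 = E + 2/r_B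
   is bounded, and with it the angular momentum, as c^2 <= r^2 |v|^2.
   The one-sided derivatives at the endpoints are first made two-sided by continuing
   every function affinely beyond [-T, 0]. *)

Definition extend (a b : R) (f df : R -> R) (s : R) : R :=
  if Rlt_dec s a then f a + df a * (s - a)
  else if Rlt_dec b s then f b + df b * (s - b)
  else f s.

Lemma extend_eq a b f df t : a <= t <= b -> extend a b f df t = f t.
Proof.
  intros ht; unfold extend.
  destruct (Rlt_dec t a); [lra|]; destruct (Rlt_dec b t); [lra|]; reflexivity.
Qed.

Lemma is_derive_extend a b f df t :
  a <= t <= b -> deriv_within a b f (df t) t -> is_derive (extend a b f df) t (df t).
Proof.
  intros ht Hf. apply is_derive_Reals. intros eps heps.
  destruct (Hf eps heps) as [d0 [hd0 Hd0]].
  set (da := if Rlt_dec a t then t - a else d0).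
  set (db := if Rlt_dec t b then b - t else d0).
  assert (hda : 0 < da) by (unfold da; destruct (Rlt_dec a t); lra).
  assert (hdb : 0 < db) by (unfold db; destruct (Rlt_dec t b); lra).
  exists (mkposreal _ (Rmin_pos _ _ hd0 (Rmin_pos _ _ hda hdb))); simpl.
  intros h hh Hh.
  assert (Hh0 := Rlt_le_trans _ _ _ Hh (Rmin_l _ _)).
  assert (Hha := Rlt_le_trans _ _ _ Hh (Rle_trans _ _ _ (Rmin_r _ _) (Rmin_l _ _))).
  assert (Hhb := Rlt_le_trans _ _ _ Hh (Rle_trans _ _ _ (Rmin_r _ _) (Rmin_r _ _))).
  rewrite (extend_eq a b f df t ht). unfold extend.
  destruct (Rlt_dec (t + h) a) as [hlt|hge].
  - assert (t = a).
    { unfold da in Hha; destruct (Rlt_dec a t); [|lra].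
      apply Rabs_def2 in Hha; lra. }
    subst t. replace ((f a + df a * (a + h - a) - f a) / h - df a) with 0 by (field; auto).
    rewrite Rabs_R0; exact heps.
  - destruct (Rlt_dec b (t + h)) as [hgt|hle].
    + assert (t = b).
      { unfold db in Hhb; destruct (Rlt_dec t b); [|lra].
        apply Rabs_def2 in Hhb; lra. }
      subst t. replace ((f b + df b * (b + h - b) - f b) / h - df b) with 0 by (field; auto).
      rewrite Rabs_R0; exact heps.
    + specialize (Hd0 (t + h)). replace (t + h - t) with h in Hd0 by ring.
      apply Hd0; [lra|]. split; [apply Rabs_pos_lt|]; auto.
Qed.

Lemma deriv_within_of_is_derive a b f g l t :
  (forall s, a <= s <= b -> g s = f s) -> a <= t <= b ->
  is_derive g t l -> deriv_within a b f l t.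
Proof.
  intros Hgf ht Hg eps heps. apply is_derive_Reals in Hg.
  destruct (Hg eps heps) as [d Hd]. exists d; split; [apply cond_pos|].
  intros s hs [hst hsd].
  assert (hne : s - t <> 0) by (intro E; rewrite E, Rabs_R0 in hst; lra).
  specialize (Hd (s - t) hne hsd). replace (t + (s - t)) with s in Hd by ring.
  rewrite <- (Hgf s hs), <- (Hgf t ht). exact Hd.
Qed.

Lemma interval_point_near a b t delta : a < b -> a <= t <= b -> 0 < delta ->
  exists s, a <= s <= b /\ 0 < Rabs (s - t) < delta.
Proof.
  intros hab ht hd.
  set (h := Rmin delta (b - a) / 2).
  assert (hh : 0 < h /\ h < delta /\ h <= (b - a) / 2).
  { assert (H1 := Rmin_l delta (b - a)); assert (H2 := Rmin_r delta (b - a)).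
    assert (H3 := Rmin_pos delta (b - a) hd ltac:(lra)). unfold h; lra. }
  destruct (Rle_dec (t + h) b).
  - exists (t + h). replace (t + h - t) with h by ring. rewrite Rabs_pos_eq; lra.
  - exists (t - h). replace (t - h - t) with (- h) by ring.
    rewrite Rabs_Ropp, Rabs_pos_eq; lra.
Qed.

Lemma deriv_within_unique a b f d1 d2 t : a < b -> a <= t <= b ->
  deriv_within a b f d1 t -> deriv_within a b f d2 t -> d1 = d2.
Proof.
  intros hab ht H1 H2. destruct (Req_dec d1 d2) as [|hne]; [assumption|]. exfalso.
  set (eps := Rabs (d1 - d2) / 2).
  assert (heps : 0 < eps) by (apply Rdiv_lt_0_compat; [apply Rabs_pos_lt|]; lra).
  destruct (H1 eps heps) as [e1 [he1 He1]], (H2 eps heps) as [e2 [he2 He2]].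
  destruct (interval_point_near a b t (Rmin e1 e2) hab ht (Rmin_pos _ _ he1 he2))
    as [s [hs hst]].
  set (q := (f s - f t) / (s - t)).
  assert (Hq1 : Rabs (q - d1) < eps) by (apply He1; [|pose proof (Rmin_l e1 e2)]; lra).
  assert (Hq2 : Rabs (q - d2) < eps) by (apply He2; [|pose proof (Rmin_r e1 e2)]; lra).
  assert (Rabs (d1 - d2) <= Rabs (q - d1) + Rabs (q - d2)).
  { replace (d1 - d2) with (- (q - d1) + (q - d2)) by ring.
    rewrite <- (Rabs_Ropp (q - d1)). apply Rabs_triang. }
  unfold eps in *; lra.
Qed.

Lemma antitone_of_is_derive_nonpos f df a b :
  (forall s, a <= s <= b -> is_derive f s (df s)) ->
  (forall s, a <= s <= b -> df s <= 0) ->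
  forall u w, a <= u -> u <= w -> w <= b -> f w <= f u.
Proof.
  intros Hf Hdf u w hu huw hw. destruct (Req_dec u w) as [<-|hne]; [lra|].
  destruct (MVT_cor2 f df u w) as [c [Hc hc]]; [lra| |].
  - intros c hc; apply is_derive_Reals, Hf; lra.
  - assert (df c * (w - u) <= 0) by (apply Rmult_le_0_r; [apply Hdf|]; lra). lra.
Qed.

Lemma is_derive_continuous f t l : is_derive f t l ->
  forall eps, 0 < eps -> exists delta, 0 < delta /\
    forall s, Rabs (s - t) < delta -> Rabs (f s - f t) < eps.
Proof.
  intros Hf eps heps.
  assert (Hc : continuity_pt f t).
  { apply derivable_continuous_pt. exists l. apply is_derive_Reals, Hf. }
  destruct (proj1 (continuity_pt_locally f t) Hc (mkposreal eps heps)) as [d Hd].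
  exists d; split; [apply cond_pos|]. intros s hs. exact (Hd s hs).
Qed.

Lemma is_derive_pos_left f t l : is_derive f t l -> 0 < l ->
  exists delta, 0 < delta /\ forall s, t - delta < s < t -> f s < f t.
Proof.
  intros Hf hl. apply is_derive_Reals in Hf.
  destruct (Hf l hl) as [d Hd]. exists d; split; [apply cond_pos|].
  intros s hs. specialize (Hd (s - t)). replace (t + (s - t)) with s in Hd by ring.
  assert (Hq : Rabs ((f s - f t) / (s - t) - l) < l).
  { apply Hd; [lra|]. rewrite Rabs_left; lra. }
  apply Rabs_def2 in Hq.
  assert (Hneg : (f s - f t) / (s - t) * (s - t) < 0) by (apply Rmult_pos_neg; lra).
  replace ((f s - f t) / (s - t) * (s - t)) with (f s - f t) in Hneg by (field; lra).
  lra.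
Qed.

Lemma barrier_le f df a b L :
  (forall s, a <= s <= b -> is_derive f s (df s)) -> f b <= L ->
  (forall s, a <= s <= b -> f s = L -> 0 < df s) ->
  forall t, a <= t <= b -> f t <= L.
Proof.
  intros Hf HbL Hcross t ht. apply Rnot_lt_le. intros HtL.
  set (A := fun s => t <= s <= b /\ L < f s).
  destruct (completeness A) as [sigma [Hub Hlub]].
  { exists b. intros s [hs _]. lra. }
  { exists t. split; [lra | exact HtL]. }
  assert (ht_sigma : t <= sigma) by (apply Hub; split; [lra | exact HtL]).
  assert (hsigma_b : sigma <= b) by (apply Hlub; intros s [hs _]; lra).
  assert (hsigma : a <= sigma <= b) by lra.
  assert (Hf_sigma : f sigma <= L).
  { apply Rnot_lt_le. intros HLsigma.
    assert (hsigma_lt_b : sigma < b) by (destruct (Req_dec sigma b) as [->|]; lra).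
    destruct (is_derive_continuous f sigma (df sigma) (Hf sigma hsigma) (f sigma - L))
      as [d [hd Hd]]; [lra|].
    set (s := Rmin (sigma + d / 2) b).
    assert (hs : sigma < s /\ s - sigma < d).
    { unfold s, Rmin; destruct Rle_dec; lra. }
    assert (Hs : A s).
    { split; [unfold s, Rmin; destruct Rle_dec; lra|].
      assert (Hds : Rabs (f s - f sigma) < f sigma - L) by (apply Hd; rewrite Rabs_pos_eq; lra).
      apply Rabs_def2 in Hds. lra. }
    assert (Hub' := Hub s Hs). lra. }
  assert (Hleft : exists d, 0 < d /\ forall s, sigma - d < s < sigma -> f s < L).
  { destruct (Rlt_or_le (f sigma) L) as [HsigmaL|HsigmaL].
    - destruct (is_derive_continuous f sigma (df sigma) (Hf sigma hsigma) (L - f sigma))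
        as [d [hd Hd]]; [lra|].
      exists d; split; [exact hd|]. intros s hs.
      assert (Hds : Rabs (f s - f sigma) < L - f sigma) by (apply Hd; rewrite Rabs_left; lra).
      apply Rabs_def2 in Hds. lra.
    - assert (Heq : f sigma = L) by lra.
      destruct (is_derive_pos_left f sigma (df sigma) (Hf sigma hsigma) (Hcross sigma hsigma Heq))
        as [d [hd Hd]].
      exists d; split; [exact hd|]. intros s hs. rewrite <- Heq. apply Hd, hs. }
  destruct Hleft as [d [hd Hd]].
  assert (sigma <= sigma - d); [|lra].
  apply Hlub. intros s [hs Hs].
  assert (s <= sigma) by (apply Hub; split; assumption).
  apply Rnot_lt_le. intros hsd.
  destruct (Req_dec s sigma) as [->|hne]; [lra|].
  assert (f s < L) by (apply Hd; lra). lra.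
Qed.



Lemma sum_sq_pos x y : (x, y) <> (0, 0) -> 0 < x ^ 2 + y ^ 2.
Proof.
  intros hxy. destruct (Req_dec x 0) as [->|hx].
  - destruct (Req_dec y 0) as [->|hy]; [congruence|].
    assert (0 < y ^ 2) by (apply pow2_gt_0; exact hy). simpl; nra.
  - assert (0 < x ^ 2) by (apply pow2_gt_0; exact hx). simpl; nra.
Qed.

Lemma norm2_pos x y : (x, y) <> (0, 0) -> 0 < norm2 x y.
Proof. intros hxy. apply sqrt_lt_R0, sum_sq_pos, hxy. Qed.

Lemma norm2_sq x y : norm2 x y ^ 2 = x ^ 2 + y ^ 2.
Proof. unfold norm2. rewrite pow2_sqrt; [reflexivity|]. nra. Qed.

Lemma cross_sq_le x1 x2 v1 v2 :
  (x1 * v2 - x2 * v1) ^ 2 <= (x1 ^ 2 + x2 ^ 2) * (v1 ^ 2 + v2 ^ 2).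
Proof.
  assert (Hlagrange : (x1 ^ 2 + x2 ^ 2) * (v1 ^ 2 + v2 ^ 2)
                      = (x1 * v2 - x2 * v1) ^ 2 + (x1 * v1 + x2 * v2) ^ 2) by ring.
  rewrite Hlagrange. assert (H := pow2_ge_0 (x1 * v1 + x2 * v2)). lra.
Qed.

Definition two_sided_solution (D : R -> R -> R) (T : R) (x1 x2 v1 v2 : R -> R) : Prop :=
  forall t, -T <= t <= 0 ->
    (x1 t, x2 t) <> (0, 0) /\ is_derive x1 t (v1 t) /\ is_derive x2 t (v2 t) /\
    is_derive v1 t (- D (x1 t) (x2 t) * v1 t - x1 t / norm2 (x1 t) (x2 t) ^ 3) /\
    is_derive v2 t (- D (x1 t) (x2 t) * v2 t - x2 t / norm2 (x1 t) (x2 t) ^ 3).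

Lemma is_solution_extend D T x1 x2 v1 v2 : is_solution D T x1 x2 v1 v2 ->
  exists X1 X2 V1 V2, two_sided_solution D T X1 X2 V1 V2 /\
    forall t, -T <= t <= 0 -> X1 t = x1 t /\ X2 t = x2 t /\ V1 t = v1 t /\ V2 t = v2 t.
Proof.
  intros hsol.
  set (a1 := fun t => - D (x1 t) (x2 t) * v1 t - x1 t / norm2 (x1 t) (x2 t) ^ 3).
  set (a2 := fun t => - D (x1 t) (x2 t) * v2 t - x2 t / norm2 (x1 t) (x2 t) ^ 3).
  exists (extend (-T) 0 x1 v1), (extend (-T) 0 x2 v2),
         (extend (-T) 0 v1 a1), (extend (-T) 0 v2 a2).
  assert (Heq : forall t, -T <= t <= 0 ->
            extend (-T) 0 x1 v1 t = x1 t /\ extend (-T) 0 x2 v2 t = x2 t /\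
            extend (-T) 0 v1 a1 t = v1 t /\ extend (-T) 0 v2 a2 t = v2 t).
  { intros t ht. repeat split; apply extend_eq, ht. }
  split; [|exact Heq].
  intros t ht. destruct (hsol t ht) as (hx & dx1 & dx2 & dv1 & dv2).
  destruct (Heq t ht) as (-> & -> & -> & ->).
  exact (conj hx (conj (is_derive_extend _ _ x1 v1 t ht dx1)
    (conj (is_derive_extend _ _ x2 v2 t ht dx2)
    (conj (is_derive_extend _ _ v1 a1 t ht dv1) (is_derive_extend _ _ v2 a2 t ht dv2))))).
Qed.

(* [auto_derive] produces [Derive (fun s => f s) t], which a plain
   [rewrite (is_derive_unique _ _ _ H)] does not match. *)
Ltac rewrite_Derive H :=
  match type of H with
  | is_derive ?f ?t ?l => rewrite (is_derive_unique (fun s : R => f s) t l H)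
  end.

Section DampedKepler.

Variables (D : R -> R -> R) (B T : R) (x1 x2 v1 v2 : R -> R).
Hypothesis hT : 0 < T.
Hypothesis hD : forall x y, (x, y) <> (0, 0) -> 0 <= D x y <= B.
Hypothesis hsol : two_sided_solution D T x1 x2 v1 v2.

Let radius t := norm2 (x1 t) (x2 t).
Let virial t := x1 t * v1 t + x2 t * v2 t.
Let energy t := v1 t ^ 2 + v2 t ^ 2 - 2 / radius t.

Lemma radius_pos t : -T <= t <= 0 -> 0 < radius t.
Proof. intros ht. apply norm2_pos, (hsol t ht). Qed.

Lemma is_derive_radius t : -T <= t <= 0 -> is_derive radius t (virial t / radius t).
Proof.
  intros ht. destruct (hsol t ht) as (hx & dx1 & dx2 & _).
  assert (hpos := sum_sq_pos _ _ hx). assert (hr := radius_pos t ht).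
  unfold radius, norm2 in *. auto_derive.
  - repeat split; try (eexists; eassumption). simpl in hpos; exact hpos.
  - rewrite_Derive dx1. rewrite_Derive dx2. unfold virial, radius, norm2.
    replace (x1 t * (x1 t * 1) + x2 t * (x2 t * 1)) with (x1 t ^ 2 + x2 t ^ 2) by ring.
    field. lra.
Qed.

Lemma is_derive_energy t : -T <= t <= 0 ->
  is_derive energy t (- 2 * D (x1 t) (x2 t) * (v1 t ^ 2 + v2 t ^ 2)).
Proof.
  intros ht. destruct (hsol t ht) as (_ & _ & _ & dv1 & dv2).
  assert (dr := is_derive_radius t ht). assert (hr := radius_pos t ht).
  fold (radius t) in dv1, dv2.
  unfold energy. auto_derive.
  - repeat split; try (eexists; eassumption). lra.
  - rewrite_Derive dv1. rewrite_Derive dv2. rewrite_Derive dr. unfold virial.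
    field. lra.
Qed.

Lemma energy_le t : -T <= t <= 0 -> energy 0 <= energy t.
Proof.
  intros ht.
  apply (antitone_of_is_derive_nonpos energy
           (fun s => - 2 * D (x1 s) (x2 s) * (v1 s ^ 2 + v2 s ^ 2)) (-T) 0); try lra.
  - exact is_derive_energy.
  - intros s hs. destruct (hD _ _ (proj1 (hsol s hs))) as [hD0 _].
    assert (0 <= v1 s ^ 2 + v2 s ^ 2) by (simpl; nra). nra.
Qed.

Lemma is_derive_virial t : -T <= t <= 0 ->
  is_derive virial t (v1 t ^ 2 + v2 t ^ 2 - D (x1 t) (x2 t) * virial t - / radius t).
Proof.
  intros ht. destruct (hsol t ht) as (_ & dx1 & dx2 & dv1 & dv2).
  assert (hr := radius_pos t ht). assert (hr2 := norm2_sq (x1 t) (x2 t)).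
  fold (radius t) in hr2, dv1, dv2.
  unfold virial. auto_derive.
  - repeat split; eexists; eassumption.
  - rewrite_Derive dx1. rewrite_Derive dx2. rewrite_Derive dv1. rewrite_Derive dv2.
    replace (/ radius t) with ((x1 t ^ 2 + x2 t ^ 2) / radius t ^ 3)
      by (rewrite <- hr2; field; lra).
    field. lra.
Qed.

(* Where virial t - c t = m we have virial t <= m, so D virial t <= B m, while
   |v|^2 >= energy 0 + 2 / radius t; the derivative is then at least 1 / radius t > 0. *)
Lemma virial_le_affine m c : 0 <= m -> virial 0 <= m -> 0 <= c <= energy 0 - B * m ->
  forall t, -T <= t <= 0 -> virial t - c * t <= m.
Proof.
  intros hm hY0 hc.
  apply (barrier_le (fun t => virial t - c * t)
           (fun t => v1 t ^ 2 + v2 t ^ 2 - D (x1 t) (x2 t) * virial t - / radius t - c));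
    try lra.
  - intros s hs. assert (dY := is_derive_virial s hs). auto_derive.
    + eexists; eassumption.
    + rewrite_Derive dY. ring.
  - intros s hs Hs.
    destruct (hD _ _ (proj1 (hsol s hs))) as [hD0 hDB].
    assert (hE := energy_le s hs).
    assert (hr := radius_pos s hs).
    assert (hdamp : D (x1 s) (x2 s) * virial s <= B * m).
    { assert (D (x1 s) (x2 s) * (m - virial s) >= 0) by (apply Rle_ge, Rmult_le_pos; nra).
      assert ((B - D (x1 s) (x2 s)) * m >= 0) by (apply Rle_ge, Rmult_le_pos; lra).
      nra. }
    assert (0 < / radius s) by (apply Rinv_0_lt_compat, hr).
    unfold energy, Rdiv in hE, hc. lra.
Qed.

Lemma energy_end_le m : 0 <= m -> virial 0 <= m ->
  (energy 0 - B * m) * T ^ 2 <= radius (-T) ^ 2 + 2 * m * T.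
Proof.
  intros hm hY0. assert (hrT := pow2_ge_0 (radius (-T))).
  destruct (Rle_or_lt (energy 0) (B * m)) as [hle|hgt].
  { assert (0 <= (B * m - energy 0) * T ^ 2) by (apply Rmult_le_pos; nra). nra. }
  set (c := energy 0 - B * m).
  assert (hY := virial_le_affine m c hm hY0 ltac:(unfold c; lra)).
  assert (Hmono : radius 0 ^ 2 - 2 * m * 0 - c * 0 ^ 2
                  <= radius (-T) ^ 2 - 2 * m * (-T) - c * (-T) ^ 2).
  { apply (antitone_of_is_derive_nonpos (fun t => radius t ^ 2 - 2 * m * t - c * t ^ 2)
             (fun t => 2 * virial t - 2 * m - 2 * c * t) (-T) 0); try lra.
    - intros s hs. assert (dr := is_derive_radius s hs). assert (hr := radius_pos s hs).
      auto_derive.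
      + eexists; eassumption.
      + rewrite_Derive dr. field. lra.
    - intros s hs. specialize (hY s hs). lra. }
  assert (hr0 := pow2_ge_0 (radius 0)). nra.
Qed.

Lemma angular_momentum_sq_le m : 0 <= m -> virial 0 <= m ->
  (x1 0 * v2 0 - x2 0 * v1 0) ^ 2
  <= radius 0 ^ 2 * (B * m + (radius (-T) ^ 2 + 2 * m * T) / T ^ 2 + 2 / radius 0).
Proof.
  intros hm hY0. assert (h0 : -T <= 0 <= 0) by lra.
  assert (hr0 := radius_pos 0 h0).
  assert (hE : energy 0 - B * m <= (radius (-T) ^ 2 + 2 * m * T) / T ^ 2).
  { replace (energy 0 - B * m) with ((energy 0 - B * m) * T ^ 2 * / T ^ 2)
      by (field; lra).
    apply Rmult_le_compat_r; [left; apply Rinv_0_lt_compat; nra|].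
    apply energy_end_le; assumption. }
  unfold energy in hE.
  assert (Hcross := cross_sq_le (x1 0) (x2 0) (v1 0) (v2 0)).
  rewrite <- (norm2_sq (x1 0) (x2 0)) in Hcross. fold (radius 0) in Hcross.
  assert (hr02 : 0 <= radius 0 ^ 2) by apply pow2_ge_0.
  apply (Rle_trans _ _ _ Hcross), Rmult_le_compat_l; [exact hr02|]. lra.
Qed.

End DampedKepler.


Lemma angular_momentum_sq_le_of_is_solution D B T rA rB x1 x2 v1 v2 d m :
  0 < T -> (forall x y, (x, y) <> (0, 0) -> 0 <= D x y <= B) ->
  is_solution D T x1 x2 v1 v2 ->
  norm2 (x1 (-T)) (x2 (-T)) = rA -> norm2 (x1 0) (x2 0) = rB ->
  deriv_within (-T) 0 (fun t => norm2 (x1 t) (x2 t)) d 0 -> 0 <= m -> rB * d <= m ->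
  (x1 0 * v2 0 - x2 0 * v1 0) ^ 2 <= rB ^ 2 * (B * m + (rA ^ 2 + 2 * m * T) / T ^ 2 + 2 / rB).
Proof.
  intros hT hD hsol hA hB hd hm hdm.
  destruct (is_solution_extend _ _ _ _ _ _ hsol) as (X1 & X2 & V1 & V2 & hsolX & Heq).
  assert (h0 : -T <= 0 <= 0) by lra. assert (hT0 : -T <= -T <= 0) by lra.
  destruct (Heq 0 h0) as (e1 & e2 & e3 & e4).
  destruct (Heq (-T) hT0) as (eT1 & eT2 & _).
  assert (hrB : 0 < rB) by (rewrite <- hB, <- e1, <- e2; eapply radius_pos; eauto).
  assert (hY0 : X1 0 * V1 0 + X2 0 * V2 0 <= m).
  { assert (dr : is_derive (fun t => norm2 (X1 t) (X2 t)) 0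
                   ((X1 0 * V1 0 + X2 0 * V2 0) / norm2 (X1 0) (X2 0)))
      by (eapply is_derive_radius; eauto).
    apply (deriv_within_of_is_derive (-T) 0 (fun t => norm2 (x1 t) (x2 t))) in dr;
      [|intros s hs; destruct (Heq s hs) as (-> & -> & _); reflexivity | exact h0].
    assert (Hd := deriv_within_unique (-T) 0 _ _ _ 0 ltac:(lra) h0 hd dr).
    rewrite e1, e2, hB in Hd. rewrite Hd in hdm.
    replace (rB * ((x1 0 * V1 0 + x2 0 * V2 0) / rB)) with (x1 0 * V1 0 + x2 0 * V2 0)
      in hdm by (field; lra).
    rewrite e1, e2. exact hdm. }
  assert (H := angular_momentum_sq_le D B T X1 X2 V1 V2 hT hD hsolX m hm hY0).
  cbv beta in H. rewrite e1, e2, e3, e4, eT1, eT2, hA, hB in H. exact H.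
Qed.

Theorem lemma7p4 (D : R -> R -> R)
  (hD0 : forall x y, (x, y) <> (0, 0) -> 0 <= D x y)
  (hDb : exists B, forall x y, (x, y) <> (0, 0) -> Rabs (D x y) <= B)
  (hDC1 : C1_punctured D)
  (T rA rB : R) (hT : 0 < T) (hrA : 0 < rA) (hrB : 0 < rB)
  (x1 x2 v1 v2 : nat -> R -> R)
  (hsol : forall n, is_solution D T (x1 n) (x2 n) (v1 n) (v2 n))
  (hA : forall n, norm2 (x1 n (-T)) (x2 n (-T)) = rA)
  (hB : forall n, norm2 (x1 n 0) (x2 n 0) = rB)
  (hrdot : exists M, forall n, exists d,
      deriv_within (-T) 0 (fun t => norm2 (x1 n t) (x2 n t)) d 0 /\
      Rabs d <= M) :
  exists M, forall n, Rabs (x1 n 0 * v2 n 0 - x2 n 0 * v1 n 0) <= M.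
Proof.
  destruct hDb as [B0 HB0], hrdot as [M0 HM0].
  set (B := Rabs B0). set (m := rB * Rabs M0).
  set (K := rB ^ 2 * (B * m + (rA ^ 2 + 2 * m * T) / T ^ 2 + 2 / rB)).
  exists (K + 1). intros n. destruct (HM0 n) as [d [hd hdM]].
  assert (Hsq : (x1 n 0 * v2 n 0 - x2 n 0 * v1 n 0) ^ 2 <= K).
  { apply (angular_momentum_sq_le_of_is_solution D B T rA rB _ _ _ _ d m); auto.
    - intros x y hxy. split; [apply hD0, hxy|].
      apply (Rle_trans _ _ _ (Rle_abs _)), (Rle_trans _ _ _ (HB0 x y hxy)), Rle_abs.
    - apply Rmult_le_pos; [lra | apply Rabs_pos].
    - apply Rmult_le_compat_l; [lra|].
      apply (Rle_trans _ _ _ (Rle_abs d)), (Rle_trans _ _ _ hdM), Rle_abs. }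
  set (c := x1 n 0 * v2 n 0 - x2 n 0 * v1 n 0) in *.
  assert (Rabs c <= c ^ 2 + 1); [|lra].
  rewrite <- pow2_abs. assert (h := Rabs_pos c). nra.
Qed.
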